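(* Let $G$ be a finite group and $D\trianglelefteq G$, and suppose that the conjugation action of $G$ on the Burnside ring of $D$ factors through a quotient of $G$ of order $n$. (1) If $\Theta=\sum_in_iH_i$ is a $G$-relation with all $H_i\subseteq D$, then $n\Theta=\operatorname{Ind}_D^G\Theta'$ for some $D$-relation $\Theta'$. (2) Suppose moreover $N\trianglelefteq G$ with $N\subseteq D$, and every subgroup of $G$ either contains $N$ or is contained in $D$. Then for every $G$-relation $\Theta$, $n\Theta$ is the sum of a $G$-relation of the form $\operatorname{Ind}_D^G\Theta'$ with $\Theta'$ a $D$-relation and a $G$-relation of the form $\sum_jm_jU_j$ with $U_j\supseteq N$ and $\sum_jm_jU_j/N$ a $G/N$-relation.
   Context: The Burnside ring of a finite group $G$ is the free abelian group on the set of conjugacy classes of subgroups of $G$. A $G$-relation is an element $\Theta=\sum_in_iH_i$ of it with $\bigoplus_i\mathbb C[G/H_i]^{\oplus n_i}=0$ as virtual representation. For $D\le G$ and a $D$-relation $\Theta'$, $\operatorname{Ind}_D^G\Theta'$ denotes the same formal sum regarded as an element of the Burnside ring of $G$ (it is a $G$-relation). *)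

From HB Require Import structures.
From mathcomp Require Import all_boot all_order all_algebra all_fingroup all_solvable all_field all_character.
Set Implicit Arguments. Unset Strict Implicit. Unset Printing Implicit Defensive.
Import GRing.Theory Num.Theory.
Local Open Scope ring_scope.

(* A formal Z-linear combination of subgroups of gT is a function
   f : {group gT} -> int (the element sum_H f(H) [H]).  It represents an
   element of the Burnside ring of G when its support consists of subgroups
   of G; its class in the Burnside ring of G is determined by the sums of f
   over the G-conjugacy classes of subgroups. *)

Definition supported_in (gT : finGroupType) (G : {set gT})
  (f : {group gT} -> int) : Prop :=
  forall H : {group gT}, f H != 0 -> H \subset G.

Definition class_coef (gT : finGroupType) (G : {set gT})
  (f : {group gT} -> int) (H : {group gT}) : int :=
  \sum_(K : {group gT} | [exists x in G, K :==: (H :^ x)%g]) f K.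

Definition burnside_eq (gT : finGroupType) (G : {set gT})
  (f g : {group gT} -> int) : Prop :=
  forall H : {group gT}, class_coef G f H = class_coef G g H.

(* permutation character of C[G/H] is 'Ind[G, H] 1 ; a G-relation is a
   formal sum of subgroups of G whose virtual permutation representation
   vanishes, i.e. whose (virtual) character vanishes. *)
Definition is_relation (gT : finGroupType) (G : {group gT})
  (f : {group gT} -> int) : Prop :=
  supported_in G f /\
  \sum_(H : {group gT}) ('Ind[G, H] (1 : 'CF(H))) *~ f H = 0.

Definition scale_bs (gT : finGroupType) (n : nat) (f : {group gT} -> int)
  : {group gT} -> int := fun H => n%:Z * f H.

Definition add_bs (gT : finGroupType) (f g : {group gT} -> int)
  : {group gT} -> int := fun H => f H + g H.

Definition quot_bs (gT : finGroupType) (N : {group gT})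
  (u : {group gT} -> int) : {group coset_of N} -> int :=
  fun Q => \sum_(U : {group gT} | (U / N)%G == Q) u U.
Arguments quot_bs {gT} N u _.

From HB Require Import structures.
From mathcomp Require Import all_boot all_order all_algebra all_fingroup all_solvable all_field all_character.
Import GRing.Theory Num.Theory.
Local Open Scope ring_scope.

(* (1) For f supported on subgroups of D, put
         f'(L) = sum over right cosets C of K in G of f(L^(r_C^-1)),
       with r_C a representative of C.  Each twist has the same class
       coefficients as f, so f' represents #|G:K| f = n f.  Evaluating at
       x in D, a Mackey-type averaging gives
         sum_{g in G} 'Ind[D, H^g] 1 x = #|D| 'Ind[G, H] 1 x,
       and since K acts on subgroups of D like D does, the sum over G is #|K|
       times the sum over coset representatives; hence f' is a D-relation.
   (2) Push f forward along L |-> L N.  As 'Ind[G, LN] 1 averages the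
       N-translates of 'Ind[G, L] 1, this is again a G-relation, it lives on
       overgroups of N and therefore descends to a G/N-relation (permutation
       characters of G/U with N <= U are inflated from G/N).  Under the
       dichotomy hypothesis the difference with f lives on subgroups of D, and
       part (1) applies to it. *)

Section GroupSums.
Context {gT : finGroupType} {R : nmodType}.
Implicit Types (A G K : {group gT}) (F : gT -> R).

Lemma sum_mulgr A y F : y \in A -> \sum_(z in A) F (z * y)%g = \sum_(z in A) F z.
Proof.
move=> Ay; rewrite [RHS](reindex_inj (mulIg y)) /=.
by apply: eq_bigl => z; rewrite groupMr.
Qed.

Lemma sum_mulgl A y F : y \in A -> \sum_(z in A) F (y * z)%g = \sum_(z in A) F z.
Proof.
move=> Ay; rewrite [RHS](reindex_inj (mulgI y)) /=.
by apply: eq_bigl => z; rewrite groupMl.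
Qed.

Lemma sum_invg A F : \sum_(z in A) F (z^-1)%g = \sum_(z in A) F z.
Proof.
by rewrite [RHS](reindex_inj invg_inj) /=; apply: eq_bigl => z; rewrite groupV.
Qed.

Lemma sum_rcosets G K F : K \subset G ->
  (forall k g, k \in K -> g \in G -> F (k * g)%g = F g) ->
  \sum_(g in G) F g = \sum_(C in rcosets K G) F (repr C) *+ #|K|.
Proof.
move=> sKG FK; rewrite (partition_big_imset (rcoset K)) /=.
apply: eq_bigr => _ /imsetP[y Gy ->].
have F_coset g : g \in (K :* y)%g -> F g = F y by case/rcosetP=> k Kk ->; apply: FK.
rewrite (eq_bigl (mem (K :* y)%g)) => [|g] /=.
  rewrite (eq_bigr (fun=> F y)) => [|g /F_coset //].
  by rewrite sumr_const card_rcoset rcosetE F_coset // mem_repr_rcoset.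
rewrite !rcosetE; apply/andP/idP => [[_ /eqP/rcoset_eqP //]|Kyg].
split; last exact/eqP/rcoset_eqP.
by case/rcosetP: Kyg => k Kk ->; rewrite groupM // (subsetP sKG).
Qed.

Lemma repr_rcosets_in G K C : K \subset G -> C \in rcosets K G -> repr C \in G.
Proof.
move=> sKG /imsetP[y Gy ->]; rewrite rcosetE.
have /rcosetP[k Kk ->] := mem_repr_rcoset K y.
by rewrite groupM // (subsetP sKG).
Qed.

End GroupSums.
Arguments sum_rcosets {gT R G K F}.
Arguments repr_rcosets_in {gT G K C}.

Lemma mulz_cfunE (gT : finGroupType) (B : {set gT}) (phi : 'CF(B)) (z : int) x :
  (phi *~ z) x = phi x *~ z.
Proof. by case: z => m; rewrite /intmul ?cfunE muln_cfunE. Qed.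

Section TrivialInduced.
Context {gT : finGroupType}.
Implicit Types (G D H K L N U : {group gT}).

Lemma cfInd1E D L x : L \subset D ->
  'Ind[D, L] 1 x = #|L|%:R^-1 * \sum_(z in D) ((x ^ z)%g \in L)%:R.
Proof.
by move=> sLD; rewrite cfIndE //; congr (_ * _); apply: eq_bigr => z _; rewrite cfun1E.
Qed.

Lemma cfInd1_conj D L y x : L \subset D -> y \in D ->
  'Ind[D, (L :^ y)%G] 1 x = 'Ind[D, L] 1 x.
Proof.
move=> sLD Dy; have sLyD : (L :^ y)%G \subset D by rewrite /= -(conjGid Dy) conjSg.
rewrite !cfInd1E // cardJg; congr (_ * _).
rewrite -[RHS](sum_mulgr _ (y^-1)%g _ (groupVr Dy)); apply: eq_bigr => z _.
by rewrite /= -(memJ_conjg L y) -conjgM mulgKV.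
Qed.

Lemma sum_cfInd1_conj G D H x : (D <| G)%g -> H \subset D -> x \in D ->
  \sum_(g in G) 'Ind[D, (H :^ g)%G] 1 x = #|D|%:R * 'Ind[G, H] 1 x.
Proof.
case/andP=> sDG nDG sHD Dx; have sHG := subset_trans sHD sDG.
have sHgD g : g \in G -> (H :^ g)%G \subset D.
  by move=> Gg; rewrite /= -(normsP nDG g Gg) conjSg.
under eq_bigr => g Gg do rewrite cfInd1E ?sHgD // cardJg.
rewrite -mulr_sumr cfInd1E // mulrCA exchange_big /=; congr (_ * _).
rewrite (eq_bigr (fun z => \sum_(g in G) ((x ^ g)%g \in H)%:R)).
  by rewrite sumr_const mulr_natl.
move=> z Dz; rewrite -(sum_invg G) -[RHS](sum_mulgl _ z _ (subsetP sDG z Dz)).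
by apply: eq_bigr => g _; rewrite -(memJ_conjg _ g) conjsgKV -conjgM.
Qed.

Lemma count_mulg_in L N y :
  \sum_(m in N) ((y * m)%g \in L)%:R = ((y \in (L * N)%g)%:R * #|L :&: N|%:R : algC).
Proof.
have [/mulsgP[l n Ll Nn ->]|nLNy] := boolP (y \in (L * N)%g); last first.
  rewrite mul0r; apply: big1 => m Nm; have [yLm|//] := boolP (_ \in L).
  by case/negP: nLNy; rewrite -(mulgK m y) mem_mulg // groupV.
rewrite mul1r (eq_bigr (fun m => ((n * m)%g \in L)%:R)) => [|m _]; last first.
  by rewrite -mulgA groupMl.
rewrite (sum_mulgl _ n (fun m => (m \in L)%:R) Nn) -natr_sum -sum1_card.
congr _%:R; rewrite [RHS]big_mkcond [LHS]big_mkcond /=; apply: eq_bigr => m _.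
by rewrite in_setI andbC; case: (m \in N); case: (m \in L).
Qed.

Lemma cfInd1_join G L N x : (N <| G)%g -> L \subset G -> x \in G ->
  #|N|%:R * 'Ind[G, (L <*> N)%G] 1 x = \sum_(m in N) 'Ind[G, L] 1 (x * m)%g.
Proof.
case/andP=> sNG nNG sLG Gx; have nLN := subset_trans sLG nNG.
have sLNG : (L <*> N)%G \subset G by rewrite /= join_subG sLG.
rewrite cfInd1E // /= norm_joinEl //.
under [RHS]eq_bigr do rewrite cfInd1E //.
rewrite -mulr_sumr exchange_big /=.
rewrite [X in _ = _ * X](eq_bigr (fun g => ((x ^ g)%g \in (L * N)%g)%:R * #|L :&: N|%:R));
  last first.
  move=> g Gg; rewrite -count_mulg_in [RHS](reindex_inj (conjg_inj g)) /=.
  apply: eq_big => [m|m _]; first by rewrite memJ_norm // (subsetP nNG).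
  by rewrite conjMg.
rewrite -mulr_suml [LHS]mulrA [RHS]mulrA [RHS]mulrAC; congr (_ * _).
have nzL : (#|L|%:R : algC) != 0 by rewrite pnatr_eq0 -lt0n cardG_gt0.
have nzLN : (#|(L * N)%g|%:R : algC) != 0.
  by rewrite pnatr_eq0 -lt0n -norm_joinEl // cardG_gt0.
apply: (mulfI nzL); rewrite mulrA -natrM mul_cardG natrM mulrAC mulfV // mul1r.
by rewrite mulrA mulfV // mul1r.
Qed.

Lemma cfMod_Ind1 G N U : (N <| G)%g -> N \subset U -> U \subset G ->
  ('Ind[(G / N)%G, (U / N)%G] 1 %% N)%CF = 'Ind[G, U] 1.
Proof.
move=> /andP[_ nNG] sNU sUG.
have skU : ('ker (coset N))%g \subset U by rewrite ker_coset.
by have := cfIndMorph (f := coset N) 1 skU sUG nNG; rewrite rmorph1.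
Qed.

End TrivialInduced.

Lemma sum_neq0_term {I : finType} {V : nmodType} (P : pred I) (a : I -> V) :
  \sum_(i | P i) a i != 0 -> exists2 i, P i & a i != 0.
Proof.
move=> nz; have /exists_inP[i Pi ai] : [exists (i | P i), a i != 0].
  apply: contraNT nz => /exists_inP none; apply/eqP/big1 => i Pi.
  by have [//|ai] := eqVneq (a i) 0; case: none; exists i.
by exists i.
Qed.

Lemma sum_fibres {T U : finType} {V : zmodType} (h : T -> U) (F : U -> V)
  (a : T -> int) :
  \sum_(u : U) F u *~ (\sum_(t | h t == u) a t) = \sum_(t : T) F (h t) *~ a t.
Proof.
rewrite [RHS](partition_big h xpredT) //=; apply: eq_bigr => u _.
by rewrite mulrz_sumr; apply: eq_big => // t /eqP ->.
Qed.

Section FormalSums.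
Context {gT : finGroupType}.
Implicit Types (G H : {group gT}) (f g : {group gT} -> int).

Lemma is_relation_sub G f g : is_relation G f -> is_relation G g ->
  is_relation G (fun H => f H - g H).
Proof.
move=> [suppf charf] [suppg charg]; split.
  move=> H; have [-> | /suppf //] := eqVneq (f H) 0.
  by rewrite sub0r oppr_eq0 => /suppg.
by under eq_bigr do rewrite mulrzBr; rewrite sumrB charf charg subr0.
Qed.

Lemma scale_bs_neq0 n f H : scale_bs n f H != 0 -> f H != 0.
Proof. by rewrite /scale_bs mulf_eq0 negb_or => /andP[]. Qed.

Lemma is_relation_scale G n f : is_relation G f -> is_relation G (scale_bs n f).
Proof.
move=> [suppf charf]; split => [H /scale_bs_neq0 /suppf // | ].
under eq_bigr do rewrite /scale_bs mulrC mulrzA.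
by rewrite -mulrz_suml charf mul0rz.
Qed.

Lemma class_coef_scale G n f H :
  class_coef G (scale_bs n f) H = n%:Z * class_coef G f H.
Proof. by rewrite /class_coef mulr_sumr. Qed.

Lemma class_coef_add G f g H :
  class_coef G (add_bs f g) H = class_coef G f H + class_coef G g H.
Proof. exact: big_split. Qed.

Lemma class_coef_conj G f H r : r \in G ->
  \sum_(L : {group gT} | [exists x in G, L :==: (H :^ x)%g]) f (L :^ r^-1)%G
  = class_coef G f H.
Proof.
move=> Gr; have conj_inj : injective (fun L : {group gT} => (L :^ r^-1)%G).
  by move=> L1 L2 /(congr1 val) /= /conjsg_inj eL; apply: val_inj.
rewrite /class_coef [RHS](reindex_inj conj_inj) /=; apply: eq_bigl => L.
apply/existsP/existsP => -[x /andP[Gx /eqP eL]].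
  by exists (x * r^-1)%g; rewrite groupM ?groupV //= eL conjsgM eqxx.
by exists (x * r)%g; rewrite groupM //= conjsgM -eL conjsgKV eqxx.
Qed.

End FormalSums.

(* When G acts on
   the Burnside ring of D through G/K, this realises multiplication by #|G:K|
   inside the Burnside ring of D. *)
Definition conj_transfer {gT : finGroupType} (G K : {set gT})
  (f : {group gT} -> int) (L : {group gT}) : int :=
  \sum_(C in rcosets K G) f (L :^ (repr C)^-1)%G.

Section Transfer.
Context {gT : finGroupType}.
Context {G D K : {group gT}}.
Hypotheses (nDG : (D <| G)%g) (sKG : K \subset G).
(* K acts on subgroups of D as inner automorphisms of D do. *)
Hypothesis conjK_inner : forall k, k \in K -> forall H : {group gT},
  H \subset D -> exists2 d, d \in D & (H :^ k)%g = (H :^ d)%g.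
Implicit Types (H L : {group gT}) (f : {group gT} -> int).

(* Each of the #|G : K| twists has the class coefficients of f. *)
Lemma class_coef_transfer f H :
  class_coef G (conj_transfer G K f) H = (#|G : K|%g)%:Z * class_coef G f H.
Proof.
rewrite /class_coef /conj_transfer exchange_big /=.
rewrite (eq_bigr (fun=> class_coef G f H)) => [|C CG]; last first.
  by rewrite class_coef_conj // (repr_rcosets_in sKG).
by rewrite sumr_const mulrC -natz mulr_natr.
Qed.

(* D is normal in G, so the twists of subgroups of D stay in D. *)
Lemma conj_transfer_supported f :
  supported_in D f -> supported_in D (conj_transfer G K f).
Proof.
move=> suppf L /sum_neq0_term[C CG /suppf]; rewrite /= sub_conjgV.
by move/subset_trans; apply; rewrite (normsP (normal_norm nDG)) // (repr_rcosets_in sKG).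
Qed.

Lemma sum_conj_transfer (V : zmodType) (F : {group gT} -> V) f :
  \sum_L F L *~ conj_transfer G K f L
  = \sum_(C in rcosets K G) \sum_H F (H :^ repr C)%G *~ f H.
Proof.
under eq_bigr do rewrite mulrz_sumr; rewrite exchange_big /=.
apply: eq_bigr => C _.
have conj_inj : injective (fun H : {group gT} => (H :^ repr C)%G).
  by move=> H1 H2 /(congr1 val) /= /conjsg_inj eH; apply: val_inj.
rewrite (reindex_inj conj_inj) /=; apply: eq_bigr => H _.
by congr (_ *~ f _); apply: val_inj; rewrite /= conjsgK.
Qed.

Lemma cfInd1_conjK H x k g : H \subset D -> k \in K -> g \in G ->
  'Ind[D, (H :^ (k * g))%G] 1 x = 'Ind[D, (H :^ g)%G] 1 x.
Proof.
move=> sHD Kk Gg; have [sDG nDG'] := andP nDG.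
have [d Dd eHk] := conjK_inner k Kk H sHD.
have -> : (H :^ (k * g))%G = ((H :^ g) :^ (d ^ g))%G.
  by apply: val_inj; rewrite /= conjsgM eHk -conjsgM conjgC conjsgM.
apply: cfInd1_conj; last by rewrite memJ_norm // (subsetP nDG').
by rewrite /= -(normsP nDG' g Gg) conjSg.
Qed.

Lemma rcosets_cfInd1 H x : H \subset D -> x \in D ->
  #|K|%:R * \sum_(C in rcosets K G) 'Ind[D, (H :^ repr C)%G] 1 x
  = #|D|%:R * 'Ind[G, H] 1 x.
Proof.
move=> sHD Dx; rewrite -sum_cfInd1_conj // (sum_rcosets sKG); last first.
  by move=> k g Kk Gg; apply: cfInd1_conjK.
by rewrite mulr_sumr; apply: eq_bigr => C _; rewrite mulr_natl.
Qed.

Lemma conj_transfer_relation f :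
  is_relation G f -> supported_in D f -> is_relation D (conj_transfer G K f).
Proof.
move=> [_ charf] suppf; split; first exact: conj_transfer_supported.
rewrite sum_conj_transfer; apply/cfun_inP => x Dx.
have charfx : \sum_(H : {group gT}) 'Ind[G, H] 1 x *~ f H = 0.
  have := congr1 (fun phi : 'CF(G) => phi x) charf; rewrite /= sum_cfunE cfunE.
  by move=> charfx; rewrite -[RHS]charfx; apply: eq_bigr => H _; rewrite mulz_cfunE.
have nzK : (#|K|%:R : algC) != 0 by rewrite pnatr_eq0 -lt0n cardG_gt0.
apply: (mulfI nzK); rewrite cfunE mulr0 sum_cfunE.
under eq_bigr do rewrite sum_cfunE; rewrite exchange_big /=.
transitivity (#|D|%:R * \sum_(H : {group gT}) 'Ind[G, H] 1 x *~ f H).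
  2: by rewrite charfx mulr0.
rewrite mulr_sumr [RHS]mulr_sumr; apply: eq_bigr => H _.
have [-> | /suppf sHD] := eqVneq (f H) 0.
  by rewrite mulr0z mulr0 big1 ?mulr0 // => C _; rewrite mulz_cfunE mulr0z.
under eq_bigr do rewrite mulz_cfunE.
by rewrite -mulrz_suml !mulrzAr rcosets_cfInd1.
Qed.

End Transfer.

Definition join_sum {gT : finGroupType} (N : {group gT}) (f : {group gT} -> int)
  (H : {group gT}) : int :=
  \sum_(L : {group gT} | (L <*> N)%G == H) f L.

Section JoinWithNormal.
Context {gT : finGroupType}.
Context {G N : {group gT}}.
Hypothesis nNG : (N <| G)%g.
Implicit Types (H L U : {group gT}) (f u : {group gT} -> int).

Lemma join_sum_support {f} : supported_in G f ->
  forall U, join_sum N f U != 0 -> N \subset U /\ U \subset G.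
Proof.
move=> suppf U /sum_neq0_term[L /eqP <- /suppf sLG].
by rewrite /= joing_subr join_subG sLG normal_sub.
Qed.

(* L |-> L N maps G-relations to G-relations, since the permutation
   character of G/LN is an average of translates of that of G/L. *)
Lemma join_sum_relation f : is_relation G f -> is_relation G (join_sum N f).
Proof.
move=> [suppf charf]; split=> [U /(join_sum_support suppf)[] // | ].
rewrite /join_sum (sum_fibres (fun L => (L <*> N)%G) (fun H => 'Ind[G, H] 1)).
apply/cfun_inP => x Gx; rewrite cfunE sum_cfunE.
have nzN : (#|N|%:R : algC) != 0 by rewrite pnatr_eq0 -lt0n cardG_gt0.
apply: (mulfI nzN); rewrite mulr0 mulr_sumr.
transitivity (\sum_(m in N) (\sum_(L : {group gT}) 'Ind[G, L] 1 *~ f L) (x * m)%g); last first.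
  by apply: big1 => m _; rewrite charf cfunE.
under [RHS]eq_bigr do rewrite sum_cfunE.
rewrite [RHS]exchange_big /=; apply: eq_bigr => L _.
have [-> | fL] := eqVneq (f L) 0.
  by rewrite mulr0z cfunE mulr0 big1 // => m _; rewrite mulr0z cfunE.
under [RHS]eq_bigr do rewrite mulz_cfunE.
by rewrite mulz_cfunE mulrzAr -mulrz_suml cfInd1_join // suppf.
Qed.

(* A G-relation supported on overgroups of N descends to a G/N-relation,
   because permutation characters of such G/U are inflated from G/N. *)
Lemma quot_relation u : is_relation G u ->
  (forall U, u U != 0 -> N \subset U) -> is_relation (G / N)%G (quot_bs N u).
Proof.
move=> [suppu charu] sNu; split.
  by move=> Q /sum_neq0_term[U /eqP <- /suppu sUG]; rewrite quotientS.
rewrite /quot_bs (sum_fibres (fun U => (U / N)%G) (fun Q => 'Ind[(G / N)%G, Q] 1)).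
apply: (can_inj (cfModK nNG)); rewrite raddf0 raddf_sum -[RHS]charu.
apply: eq_bigr => U _; rewrite raddfMz.
have [-> | uU] := eqVneq (u U) 0; first by rewrite !mulr0z.
by rewrite -(cfMod_Ind1 G N U nNG) ?sNu ?suppu.
Qed.

(* If every subgroup of G contains N or lies in D, then subtracting the
   push-forward along L |-> L N leaves only subgroups of D: a subgroup
   containing N is its own image, one inside D has its image inside D. *)
Lemma sub_join_sum_supported (D : {group gT}) f : N \subset D -> supported_in G f ->
  (forall H, H \subset G -> N \subset H \/ H \subset D) ->
  supported_in D (fun H => f H - join_sum N f H).
Proof.
move=> sND suppf dichotomy H; apply: contraNT => nsHD; rewrite subr_eq0.
have eq_terms L : f L != 0 -> ((L <*> N)%G == H) = (L == H).
  move=> /suppf sLG; have [sNL | sLD] := dichotomy L sLG.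
    by congr (_ == H); apply: val_inj; apply/joing_idPl.
  have notH (M : {group gT}) : M \subset D -> (M == H) = false.
    by move=> sMD; apply: contraTF sMD => /eqP ->.
  by rewrite !notH // join_subG sLD sND.
rewrite /join_sum big_mkcond (eq_bigr (fun L => if L == H then f L else 0)).
  by rewrite -big_mkcond big_pred1_eq.
by move=> L _; have [-> | /eq_terms ->] := eqVneq (f L) 0; rewrite ?if_same.
Qed.

End JoinWithNormal.

Theorem lemma2p5 (gT : finGroupType) (G D K : {group gT}) (n : nat)
  (nDG : (D <| G)%g) (nKG : (K <| G)%g) (hn : #|G : K|%g = n)
  (hK : forall k, k \in K -> forall H : {group gT}, H \subset D ->
          exists2 d, d \in D & (H :^ k)%g = (H :^ d)%g) :
  (forall f : {group gT} -> int, is_relation G f ->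
     (forall H : {group gT}, f H != 0 -> H \subset D) ->
     exists f' : {group gT} -> int,
       is_relation D f' /\ burnside_eq G (scale_bs n f) f')
  /\
  (forall N : {group gT}, (N <| G)%g -> N \subset D ->
     (forall H : {group gT}, H \subset G -> N \subset H \/ H \subset D) ->
     forall f : {group gT} -> int, is_relation G f ->
     exists f' : {group gT} -> int, exists u : {group gT} -> int,
       [/\ is_relation D f', is_relation G u,
           (forall U : {group gT}, u U != 0 -> N \subset U),
           is_relation (G / N)%G (quot_bs N u)
         & burnside_eq G (scale_bs n f) (add_bs f' u)]).
Proof.
have sKG := normal_sub nKG.
have part1 f : is_relation G f -> supported_in D f ->
    is_relation D (conj_transfer G K f)
    /\ burnside_eq G (scale_bs n f) (conj_transfer G K f).
  move=> relf suppf; split; first exact: conj_transfer_relation.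
  by move=> H; rewrite class_coef_scale (class_coef_transfer sKG) hn.
split=> [f relf suppf | N nNG sND dichotomy f relf].
  by exists (conj_transfer G K f); apply: part1.
(* Part (2): write n f = n (f - join_sum N f) + n (join_sum N f); part (1)
   applies to f - join_sum N f, which lives on subgroups of D, and the second
   summand lives on overgroups of N. *)
pose g H := f H - join_sum N f H.
have relJ : is_relation G (join_sum N f) by apply: join_sum_relation.
have relg : is_relation G g by apply: is_relation_sub.
have suppg : supported_in D g by apply: sub_join_sum_supported relf.1 _.
have [relf' eqf'] := part1 g relg suppg.
have relu : is_relation G (scale_bs n (join_sum N f)) by apply: is_relation_scale.
have sNu U : scale_bs n (join_sum N f) U != 0 -> N \subset U.
  by move/scale_bs_neq0/(join_sum_support nNG relf.1)=> [].
exists (conj_transfer G K g), (scale_bs n (join_sum N f)); split=> //.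
  exact: quot_relation.
move=> H; rewrite class_coef_add -eqf' -class_coef_add.
by apply: eq_bigr => L _; rewrite /add_bs /scale_bs /g mulrBr subrK.
Qed.
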